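(* Let $\mathcal{R}$ be a finite ring with $q$ elements, $\mathcal{R}^- = \mathcal{R}\setminus\{0\}$, and let $\Gamma$ be a finite index set with $|\Gamma| = N$. Let $M \in \mathbb{N}$ and let $\mathbf{k} = (k_\alpha)_{\alpha\in\mathcal{R}^-} \in \mathbb{N}^{q-1}$ satisfy $\sum_{\alpha\in\mathcal{R}^-} \alpha\cdot k_\alpha = 0$ in $\mathcal{R}$ and $\sum_{\alpha\in\mathcal{R}^-} k_\alpha \le N$. Suppose that for each $\alpha\in\mathcal{R}^-$ we are given nonnegative integers $x_i^{(\alpha)}$, $i \in \Gamma$, such that $$\sum_{i\in\Gamma} x_i^{(\alpha)} = k_\alpha M \quad\text{for all } \alpha\in\mathcal{R}^-,\qquad \sum_{\alpha\in\mathcal{R}^-} x_i^{(\alpha)} \le M \quad\text{for all } i\in\Gamma.$$ Then there exist nonnegative integers $\{w_{\mathbf{a}} : \mathbf{a}\in\mathcal{C}_\Gamma^{(\mathbf{k})}\}$ such that (1) $\sum_{\mathbf{a}\in\mathcal{C}_\Gamma^{(\mathbf{k})}} w_{\mathbf{a}} = M$, and (2) for all $\alpha\in\mathcal{R}^-$ and all $i\in\Gamma$, $x_i^{(\alpha)} = \sum_{\mathbf{a}\in\mathcal{C}_\Gamma^{(\mathbf{k})},\, a_i=\alpha} w_{\mathbf{a}}$.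
   Context: For $k\in\mathbb{N}$ and $\alpha\in\mathcal{R}$, $\alpha\cdot k$ denotes $0$ if $k=0$ and the sum $\alpha+\cdots+\alpha$ ($k$ terms) if $k>0$. The single parity check code indexed by $\Gamma$ is $\mathcal{C}_\Gamma = \{\mathbf{a}=(a_i)_{i\in\Gamma}\in\mathcal{R}^N : \sum_{i\in\Gamma} a_i = 0\}$. The map $\boldsymbol{\kappa}_\Gamma:\mathcal{C}_\Gamma\to\mathbb{N}^{q-1}$ is given by $(\boldsymbol{\kappa}_\Gamma(\mathbf{a}))_\alpha = |\{i\in\Gamma : a_i=\alpha\}|$ for $\alpha\in\mathcal{R}^-$, and $\mathcal{C}_\Gamma^{(\mathbf{k})} = \{\mathbf{a}\in\mathcal{C}_\Gamma : \boldsymbol{\kappa}_\Gamma(\mathbf{a}) = \mathbf{k}\}$. *)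

From HB Require Import structures.
From mathcomp Require Import all_boot all_order all_algebra.
Set Implicit Arguments. Unset Strict Implicit. Unset Printing Implicit Defensive.
Import GRing.Theory.
Local Open Scope ring_scope.

Definition spc (R : finPzRingType) (Gamma : finType) : pred {ffun Gamma -> R} :=
  fun a => \sum_(i : Gamma) a i == 0.

Definition kappa (R : finPzRingType) (Gamma : finType) (a : {ffun Gamma -> R})
  (alpha : R) : nat := #|[set i : Gamma | a i == alpha]|.

(* C_Gamma^(k): k is indexed by R, only its values on R^- = R \ {0} matter. *)
Definition spc_k (R : finPzRingType) (Gamma : finType) (k : R -> nat)
  : pred {ffun Gamma -> R} :=
  fun a => spc a && [forall alpha : R, (alpha != 0) ==> (kappa a alpha == k alpha)].

From HB Require Import structures.
From mathcomp Require Import all_boot all_order all_algebra.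
Set Implicit Arguments. Unset Strict Implicit. Unset Printing Implicit Defensive.
Import GRing.Theory.

(* The heart of the argument is purely combinatorial and does not involve the
   ring: a nonnegative integer array X indexed by symbols s and positions i,
   whose column sums are all M and whose row sums are K s * M, is a sum of M
   words f : Gamma -> Sym of composition K, where word f contributes 1 to the
   entries X (f i) i.  We peel off one word at a time; such a word exists by a
   capacitated version of Hall's marriage theorem (positions are matched to
   symbols s with X s i > 0, symbol s being used at most K s times), which is
   proved first by strong induction on the number of positions.

   The proposition follows by adding the symbol 0: the missing mass
   M - sum_(alpha != 0) x alpha i is put on the entry (0, i), which makes the
   array regular, and the words of the resulting composition are exactly
   those of C_Gamma^(k): the sum of the letters of a word depends only on its
   composition, and here it is sum_(alpha != 0) alpha *+ k alpha = 0. *)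

(* Hall's theorem with capacities: A is matched into B along the relation e,
   vertex b of B having capacity c b; b0 is a default image for the
   elements outside the matched set. *)
Section CapacitatedHall.
Variables (A B : finType) (e : A -> B -> bool) (b0 : B).

Definition nbhd (T : {set A}) (b : B) : bool := [exists a in T, e a b].

Definition hall_cond (c : B -> nat) (L : {set A}) : Prop :=
  forall T : {set A}, T \subset L -> #|T| <= \sum_(b | nbhd T b) c b.

Definition assignment (c : B -> nat) (L : {set A}) (f : A -> B) : Prop :=
  (forall a, a \in L -> e a (f a)) /\ forall b, #|[set a in L | f a == b]| <= c b.

Definition hall_upto (n : nat) : Prop :=
  forall (c : B -> nat) (L : {set A}), #|L| <= n -> hall_cond c L ->
  exists f, assignment c L f.

Lemma assignment_set0 (c : B -> nat) : exists f, assignment c set0 f.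
Proof.
exists (fun=> b0); split=> [a|b]; first by rewrite inE.
have -> : [set a in set0 | b0 == b] = set0 :> {set A} by apply/setP => a; rewrite !inE.
by rewrite cards0.
Qed.

Lemma nbhdU (S T : {set A}) (b : B) : nbhd (S :|: T) b = nbhd S b || nbhd T b.
Proof.
apply/existsP/orP => [[a /andP [/setUP [aS|aT] eab]]|[] /existsP [a /andP [aX eab]]].
- by left; apply/existsP; exists a; rewrite aS.
- by right; apply/existsP; exists a; rewrite aT.
- by exists a; rewrite inE aX.
- by exists a; rewrite inE aX orbT.
Qed.

(* Capacities left for L :\: T once T has used up all of its neighbourhood. *)
Definition residual (c : B -> nat) (T : {set A}) (b : B) : nat :=
  if nbhd T b then 0 else c b.

Lemma hall_cond_residual (c : B -> nat) (L T : {set A}) :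
  hall_cond c L -> T \subset L -> #|T| = \sum_(b | nbhd T b) c b ->
  hall_cond (residual c T) (L :\: T).
Proof.
move=> hc TL tight S SLT.
have ST0 : S :&: T = set0.
  apply/setP => a; rewrite !inE; apply/negbTE/andP => -[aS aT].
  by have := subsetP SLT a aS; rewrite inE aT.
have SUL : S :|: T \subset L by rewrite subUset TL (subset_trans SLT (subsetDl _ _)).
have cover : \sum_(b | nbhd (S :|: T) b) c b
    <= \sum_(b | nbhd T b) c b + \sum_(b | nbhd S b) residual c T b.
  rewrite (big_mkcond (nbhd (S :|: T))) (big_mkcond (nbhd T)) (big_mkcond (nbhd S)).
  rewrite -big_split /=; apply: leq_sum => b _.
  by rewrite nbhdU /residual; case: (nbhd T b); case: (nbhd S b); rewrite ?addn0.
have := hc _ SUL; rewrite cardsU ST0 cards0 subn0 addnC tight => h.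
by rewrite -(leq_add2l (\sum_(b | nbhd T b) c b)) (leq_trans h cover).
Qed.

Lemma assignment_glue (c : B -> nat) (L T : {set A}) (f1 f2 : A -> B) :
  assignment c T f1 -> assignment (residual c T) (L :\: T) f2 ->
  assignment c L (fun a => if a \in T then f1 a else f2 a).
Proof.
move=> [f1e f1c] [f2e f2c]; split=> [a aL | b].
  by case: ifP => aT; [apply: f1e | apply: f2e; rewrite inE aT].
have split_fibre : [set a in L | (if a \in T then f1 a else f2 a) == b]
    \subset [set a in T | f1 a == b] :|: [set a in L :\: T | f2 a == b].
  apply/subsetP => a; rewrite !inE => /andP [aL].
  by case: (a \in T) => /= ->; rewrite ?aL ?orbT.
apply: leq_trans (subset_leq_card split_fibre) _; apply: leq_trans (leq_card_setU _ _) _.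
have := f2c b; rewrite /residual; case: ifP => [_ | NTb].
  by rewrite leqn0 => /eqP ->; rewrite addn0.
have -> : [set a in T | f1 a == b] = set0.
  apply/setP => a; rewrite !inE; apply/negbTE/andP => -[aT /eqP f1ab].
  suff : nbhd T b by rewrite NTb.
  by apply/existsP; exists a; rewrite aT -f1ab f1e.
by rewrite cards0.
Qed.

Lemma hall_tight (n : nat) (c : B -> nat) (L T : {set A}) :
  hall_upto n -> #|L| <= n.+1 -> hall_cond c L ->
  T \subset L -> T != set0 -> T != L -> #|T| = \sum_(b | nbhd T b) c b ->
  exists f, assignment c L f.
Proof.
move=> IH hL hc TL Tn0 TnL tight.
have TltL : #|T| < #|L| by apply: proper_card; rewrite properEneq TnL.
have [f1 hf1] := IH c T (leq_trans TltL hL) (fun S ST => hc S (subset_trans ST TL)).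
have LTn : #|L :\: T| <= n.
  rewrite cardsD (setIidPr TL) leq_subLR; apply: leq_trans hL _.
  by rewrite -add1n leq_add2r card_gt0.
have [f2 hf2] := IH _ _ LTn (hall_cond_residual hc TL tight).
by exists (fun a => if a \in T then f1 a else f2 a); apply: assignment_glue.
Qed.

Definition no_tight_subset (c : B -> nat) (L : {set A}) : Prop :=
  forall T : {set A}, T \subset L -> T != set0 -> T != L ->
  #|T| < \sum_(b | nbhd T b) c b.

Definition decr (c : B -> nat) (b b' : B) : nat := if b' == b then (c b).-1 else c b'.

Lemma hall_cond_decr (c : B -> nat) (L : {set A}) (a : A) (b : B) :
  hall_cond c L -> a \in L -> 0 < c b ->
  no_tight_subset c L ->
  hall_cond (decr c b) (L :\ a).
Proof.
move=> hc aL cb slack T TLa.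
have [-> | Tn0] := eqVneq T set0; first by rewrite cards0.
have TL : T \subset L := subset_trans TLa (subsetDl _ _).
have TnL : T != L.
  by apply/eqP => TeL; move: TLa; rewrite TeL => /subsetP /(_ a aL); rewrite !inE eqxx.
have lose_one : \sum_(b' | nbhd T b') c b' <= (\sum_(b' | nbhd T b') decr c b b').+1.
  have same b' : b' != b -> decr c b b' = c b' by rewrite /decr => /negbTE ->.
  case: (boolP (nbhd T b)) => Tb.
    rewrite !(bigD1 b Tb) /= {1}/decr eqxx -addSn prednK // leq_add2l.
    by apply/eq_leq/eq_bigr => b' /andP [_ /same].
  apply/leqW/eq_leq/eq_bigr => b' Tb'; apply/esym/same.
  by apply: contraNneq Tb => <-.
by rewrite -ltnS (leq_trans (slack T TL Tn0 TnL) lose_one).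
Qed.

Lemma assignment_extend (c : B -> nat) (L : {set A}) (a : A) (b : B) (f : A -> B) :
  a \in L -> e a b -> 0 < c b -> assignment (decr c b) (L :\ a) f ->
  assignment c L (fun a' => if a' == a then b else f a').
Proof.
move=> aL eab cb [fe fc]; split=> [a' a'L | b'].
  by case: eqP => [-> // | /eqP a'a]; apply: fe; rewrite !inE a'a.
rewrite (cardsD1 a) inE aL eqxx /=.
have sub : [set a' in L | (if a' == a then b else f a') == b'] :\ a
    \subset [set a' in L :\ a | f a' == b'].
  by apply/subsetP => a'; rewrite !inE => /andP [/negbTE -> /andP [-> ->]].
apply: leq_trans (leq_add (leqnn _) (leq_trans (subset_leq_card sub) (fc b'))) _.
by rewrite /decr; case: (eqVneq b b') => [<- | _] //; rewrite add1n prednK.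
Qed.

Lemma hall_cond_edge (c : B -> nat) (L : {set A}) (a : A) :
  hall_cond c L -> a \in L -> exists2 b, e a b & 0 < c b.
Proof.
move=> hc aL; have := hc [set a]; rewrite sub1set aL cards1 => /(_ isT).
case: (pickP (fun b => e a b && (0 < c b))) => [b /andP [] | none]; first by exists b.
rewrite big1 // => b /existsP [a' /andP [/set1P -> eab]].
by have := none b; rewrite eab lt0n => /negbFE /eqP.
Qed.

Lemma hall_slack (n : nat) (c : B -> nat) (L : {set A}) :
  hall_upto n -> #|L| <= n.+1 -> hall_cond c L -> L != set0 ->
  no_tight_subset c L ->
  exists f, assignment c L f.
Proof.
move=> IH hL hc /set0Pn [a aL] slack.
have [b eab cb] := hall_cond_edge hc aL.
have La : #|L :\ a| <= n by move: hL; rewrite (cardsD1 a L) aL.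
have [f hf] := IH _ _ La (hall_cond_decr hc aL cb slack).
by exists (fun a' => if a' == a then b else f a'); apply: assignment_extend.
Qed.

Theorem capacitated_hall (c : B -> nat) (L : {set A}) :
  hall_cond c L -> exists f, assignment c L f.
Proof.
suff IH : forall n, hall_upto n by apply: IH.
elim=> [|n IH] c' L' hL hc.
  by move: hL; rewrite leqn0 cards_eq0 => /eqP ->; apply: assignment_set0.
have [-> | Ln0] := eqVneq L' set0; first exact: assignment_set0.
case: (boolP [exists T : {set A}, [&& T \subset L', T != set0, T != L' &
                                    #|T| == \sum_(b | nbhd T b) c' b]]).
  by case/existsP => T /and4P [TL Tn0 TnL /eqP]; apply: hall_tight IH hL hc TL Tn0 TnL.
move=> /existsPn notight; apply: (hall_slack IH hL hc Ln0) => T TL Tn0 TnL.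
by rewrite ltn_neqAle hc // andbT; have := notight T; rewrite TL Tn0 TnL.
Qed.

End CapacitatedHall.

Lemma sum_fibre_card (I J : finType) (f : I -> J) :
  \sum_(j : J) #|[set i | f i == j]| = #|I|.
Proof.
rewrite -sum1_card (partition_big f xpredT) //=; apply: eq_bigr => j _.
by rewrite sum1dep_card.
Qed.

Lemma sum_indicator (T : finType) (P : pred T) (t : T) :
  \sum_(u | P u) (u == t : nat) = P t.
Proof.
case Pt: (P t); first by rewrite (bigD1 t) //= eqxx big1 // => u /andP [_ /negbTE ->].
by rewrite big1 // => u Pu; case: eqP Pu => // ->; rewrite Pt.
Qed.

Section RegularDecomposition.
Variables (Sym Gamma : finType) (s0 : Sym).

Definition composition (K : Sym -> nat) (f : {ffun Gamma -> Sym}) : bool :=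
  [forall s, #|[set i | f i == s]| == K s].

Definition regular (M : nat) (K : Sym -> nat) (X : Sym -> Gamma -> nat) : Prop :=
  (forall i, \sum_s X s i = M) /\ (forall s, \sum_i X s i = K s * M).

(* Positions can be matched to the symbols with positive entries, symbol s
   being used at most K s times: a set T of positions carries mass
   #|T| * M.+1, all of it on the rows of its neighbours. *)
Lemma regular_hall_cond (M : nat) (K : Sym -> nat) (X : Sym -> Gamma -> nat) :
  regular M.+1 K X -> hall_cond (fun i s => 0 < X s i) K setT.
Proof.
move=> [rows cols] T _.
rewrite -(leq_pmul2r (ltn0Sn M)) big_distrl /= -sum1_card big_distrl /=.
under eq_bigr => i _ do rewrite mul1n -(rows i).
rewrite exchange_big /= (bigID (nbhd (fun i s => 0 < X s i) T)) /=.
rewrite [X in _ + X]big1 ?addn0; last first.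
  move=> s /existsPn NTs; apply: big1 => i iT.
  by have := NTs i; rewrite iT /= lt0n negbK => /eqP.
apply: leq_sum => s _; rewrite -cols [X in _ <= X](bigID (mem T)) /=.
exact: leq_addr.
Qed.

(* A nonzero regular array supports a word of composition K; the capacities
   are met with equality since the K s add up to #|Gamma|. *)
Lemma supported_word (M : nat) (K : Sym -> nat) (X : Sym -> Gamma -> nat) :
  regular M.+1 K X ->
  exists2 f : {ffun Gamma -> Sym}, composition K f & forall i, 0 < X (f i) i.
Proof.
move=> reg; have [rows cols] := reg.
have [f [fX fK]] := capacitated_hall s0 (regular_hall_cond reg).
have fibre_le s : #|[set i | f i == s]| <= K s.
  by apply: leq_trans (fK s); apply/subset_leq_card/subsetP => i; rewrite !inE.
have sumK : \sum_s K s = #|Gamma|.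
  apply/eqP; rewrite -(eqn_pmul2r (ltn0Sn M)) big_distrl /=.
  under eq_bigr => s _ do rewrite -cols.
  by rewrite exchange_big /= (eq_bigr _ (fun i _ => rows i)) sum_nat_const.
have /leqif_sum eq_sums := fun s (_ : true) => leqif_eq (fibre_le s).
exists [ffun i => f i]; last by move=> i; rewrite ffunE fX ?inE.
apply/forallP => s; have := eq_sums.2; rewrite sum_fibre_card sumK eqxx.
move=> /esym/forall_inP/(_ s isT)/eqP <-.
by apply/eqP/eq_card => i; rewrite !inE ffunE.
Qed.

Lemma indicator_le (X : Sym -> Gamma -> nat) (f : {ffun Gamma -> Sym}) s i :
  (forall i, 0 < X (f i) i) -> (f i == s : nat) <= X s i.
Proof. by move=> fX; case: eqP => [<-|]. Qed.

Lemma regular_peel (M : nat) (K : Sym -> nat) (X : Sym -> Gamma -> nat)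
    (f : {ffun Gamma -> Sym}) :
  regular M.+1 K X -> composition K f -> (forall i, 0 < X (f i) i) ->
  regular M K (fun s i => X s i - (f i == s)).
Proof.
move=> [rows cols] fK fX; split=> [i | s].
  rewrite sumnB => [|s' _]; last exact: indicator_le.
  rewrite rows (eq_bigr (fun s => (s == f i : nat))) => [|s _]; last by rewrite eq_sym.
  by rewrite sum_indicator subn1.
rewrite sumnB => [|i _]; last exact: indicator_le.
rewrite cols -(eqP (forallP fK s)) -sum1dep_card big_mkcond mulnSr /=.
by rewrite (eq_bigr (fun i => (f i == s : nat))) ?addnK // => i _; case: eqP.
Qed.

Theorem regular_decomposition (M : nat) (K : Sym -> nat) (X : Sym -> Gamma -> nat) :
  regular M K X ->
  exists w : {ffun Gamma -> Sym} -> nat, \sum_(f | composition K f) w f = M /\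
    forall s i, X s i = \sum_(f | composition K f && (f i == s)) w f.
Proof.
elim: M X => [|M IH] X reg.
  exists (fun=> 0); split=> [|s i]; rewrite big1 //.
  by have /eqP := reg.1 i; rewrite sum_nat_eq0 => /forallP /(_ s) /eqP.
have [f fK fX] := supported_word reg.
have [w [wM wX]] := IH _ (regular_peel reg fK fX).
exists (fun g => w g + (g == f)); split=> [|s i].
  by rewrite big_split /= wM sum_indicator fK addn1.
by rewrite big_split /= -wX sum_indicator fK subnK ?indicator_le.
Qed.

End RegularDecomposition.

Section ParityCheck.
Variables (R : finPzRingType) (Gamma : finType).

Definition fill_zero (u : R -> nat) (t : nat) (a : R) : nat :=
  if a == 0%R then t - \sum_(b | b != 0%R) u b else u a.

Lemma fill_zero_nz (u : R -> nat) (t : nat) (a : R) : a != 0%R -> fill_zero u t a = u a.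
Proof. by rewrite /fill_zero => /negbTE ->. Qed.

Lemma fill_zero_sum (u : R -> nat) (t : nat) :
  \sum_(b | b != 0%R) u b <= t -> \sum_a fill_zero u t a = t.
Proof.
move=> ut; rewrite (bigD1 0%R) //= {1}/fill_zero eqxx.
by rewrite (eq_bigr u) => [|b /fill_zero_nz //]; rewrite subnK.
Qed.

Lemma fill_zero_regular (M : nat) (k : R -> nat) (x : R -> Gamma -> nat) :
  \sum_(a | a != 0%R) k a <= #|Gamma| ->
  (forall a, a != 0%R -> \sum_i x a i = k a * M) ->
  (forall i, \sum_(a | a != 0%R) x a i <= M) ->
  regular M (fill_zero k #|Gamma|) (fun a i => fill_zero (x^~ i) M a).
Proof.
move=> kN cols rows; split=> [i | a]; first exact: fill_zero_sum.
have [->|a0] := eqVneq a 0%R; last first.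
  by rewrite fill_zero_nz // -cols //; apply: eq_bigr => i _; apply: fill_zero_nz.
rewrite /fill_zero eqxx sumnB // sum_nat_const exchange_big /= mulnBl.
by rewrite big_distrl /=; congr (_ - _); apply: eq_bigr => b b0; rewrite cols.
Qed.

Lemma sum_word_by_symbol (f : {ffun Gamma -> R}) :
  (\sum_i f i)%R = (\sum_(a | a != 0%R) a *+ kappa f a)%R.
Proof.
rewrite (partition_big f xpredT) //= (bigD1 0%R) //= big1 ?add0r => [|i /eqP //].
apply: eq_bigr => a _; rewrite /kappa -sumr_const.
by apply: eq_big => [i | i /eqP ->]; rewrite ?inE.
Qed.

Lemma spc_k_composition (k : R -> nat) (f : {ffun Gamma -> R}) :
  (\sum_(a | a != 0%R) a *+ k a)%R = 0%R ->
  spc_k k f = composition (fill_zero k #|Gamma|) f.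
Proof.
move=> hk0; rewrite /spc_k /spc sum_word_by_symbol.
apply/andP/forallP => [[_ /forallP kf] a | kf].
  have [->|a0] := eqVneq a 0%R; last by rewrite fill_zero_nz // (implyP (kf a) a0).
  have kappaE b : b != 0%R -> k b = kappa f b by move/(implyP (kf b))/eqP.
  by rewrite /fill_zero eqxx (eq_bigr _ kappaE) -(sum_fibre_card f) (bigD1 0%R) //= addnK.
have kappaE a : a != 0%R -> kappa f a = k a.
  by move=> a0; have := kf a; rewrite fill_zero_nz // => /eqP.
split; last by apply/forallP => a; apply/implyP => a0; rewrite kappaE.
by rewrite (eq_bigr (fun a => a *+ k a)%R) ?hk0 // => a a0; rewrite kappaE.
Qed.

End ParityCheck.

Theorem proposition1 (R : finPzRingType) (Gamma : finType) (M : nat)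
  (k : R -> nat)
  (hk0 : (\sum_(alpha : R | alpha != 0) (alpha *+ k alpha))%R = 0%R)
  (hkN : (\sum_(alpha : R | alpha != 0%R) k alpha <= #|Gamma|)%N)
  (x : R -> Gamma -> nat)
  (hx1 : forall alpha : R, alpha != 0%R ->
           (\sum_(i : Gamma) x alpha i)%N = (k alpha * M)%N)
  (hx2 : forall i : Gamma, (\sum_(alpha : R | alpha != 0%R) x alpha i <= M)%N) :
  exists w : {ffun Gamma -> R} -> nat,
    (\sum_(a | spc_k k a) w a)%N = M /\
    forall (alpha : R) (i : Gamma), alpha != 0%R ->
      x alpha i = (\sum_(a | spc_k k a && (a i == alpha)) w a)%N.
Proof.
have [w [wM wx]] := regular_decomposition 0%R (fill_zero_regular hkN hx1 hx2).
have spc_kE (f : {ffun Gamma -> R}) : spc_k k f = composition (fill_zero k #|Gamma|) f.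
  exact: spc_k_composition.
exists w; split=> [|a i a0]; first by rewrite -wM; apply: eq_bigl => f; rewrite spc_kE.
by rewrite -(fill_zero_nz (x^~ i) M a0) wx; apply: eq_bigl => f; rewrite spc_kE.
Qed.
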